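(* Fix positive integers $n_x,n_y$, space steps $\delta x,\delta y>0$ and a time step $\delta t>0$, and consider grid functions on the doubly periodic grid of cells $(i,j)$, $i\in\mathbb{Z}/n_x\mathbb{Z}$, $j\in\mathbb{Z}/n_y\mathbb{Z}$ (periodic boundary conditions). Let $K:(0,\infty)\to(0,\infty)$ be smooth, let $F$ satisfy $F'(\varrho)=\sqrt{K(\varrho)\varrho}$, and let $F_0:(0,\infty)\to\mathbb{R}$ be smooth with pressure $p(\varrho)=\varrho F_0'(\varrho)-F_0(\varrho)$. Define the entropy $$\bar{\mathcal{E}}(\varrho,{\bf u},{\bf w})=\frac{\varrho}{2}\bigl(|{\bf u}|^2+|{\bf w}|^2\bigr)+F_0(\varrho),\qquad \varrho>0,\ {\bf u},{\bf w}\in\mathbb{R}^2.$$ Given data $(\varrho^n_{i,j},{\bf u}^n_{i,j},{\bf w}^n_{i,j})$ with $\varrho^n_{i,j}>0$, consider the scheme $$\frac{\varrho_{i,j}^{n+1}-\varrho_{i,j}^n}{\delta t}+d_1(\mathcal{F}_{\varrho,1}^n)_{i,j}+d_2(\mathcal{F}_{\varrho,2}^n)_{i,j}=0,$$ $$\frac{(\varrho{\bf u})_{i,j}^{n+1}-(\varrho{\bf u})_{i,j}^n}{\delta t}+d_1(\mathcal{F}_{{\bf u},1}^n)_{i,j}+d_2(\mathcal{F}_{{\bf u},2}^n)_{i,j}=\bigl(\mathcal{T}_h(\varrho^{n+1}){\bf w}^{n+1}\bigr)_{i,j},$$ $$\frac{(\varrho{\bf w})_{i,j}^{n+1}-(\varrho{\bf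 w})_{i,j}^n}{\delta t}+d_1(\mathcal{F}_{{\bf w},1}^n)_{i,j}+d_2(\mathcal{F}_{{\bf w},2}^n)_{i,j}=-\bigl(\mathcal{T}_h(\varrho^{n+1}){\bf u}^{n+1}\bigr)_{i,j},$$ where $(\varrho{\bf u})^{k}_{i,j}=\varrho^k_{i,j}{\bf u}^k_{i,j}$, $(\varrho{\bf w})^{k}_{i,j}=\varrho^k_{i,j}{\bf w}^k_{i,j}$, the numerical fluxes $\mathcal{F}^n$ are the Rusanov fluxes evaluated at time level $n$ (described in the context), and $\mathcal{T}_h$ is the discrete capillary operator described in the context. Assume that the hyperbolic scheme (the same scheme with $F\equiv 0$, i.e. with zero right-hand sides) is entropy stable, i.e. $\sum_{i,j}\bar{\mathcal{E}}$ does not increase from time level $n$ to time level $n+1$ under it. Then any solution $(\varrho^{n+1},{\bf u}^{n+1},{\bf w}^{n+1})$ of the full scheme with $\varrho^{n+1}_{i,j}>0$ satisfies $$\sum_{i,j}\bar{\mathcal{E}}(\varrho_{i,j}^{n+1},{\bf u}_{i,j}^{n+1},{\bf w}_{i,j}^{n+1})\le\sum_{i,j}\bar{\mathcal{E}}(\varrho_{i,j}^{n},{\bf u}_{i,j}^{n},{\bf w}_{i,j}^{n}),$$ the sums running over all cells of the periodic grid.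
   Context: This is a discretization of the extended Euler–Korteweg system $\partial_t\varrho+{\rm div}(\varrho{\bf u})=0$, $\partial_t(\varrho{\bf u})+{\rm div}(\varrho{\bf u}\otimes{\bf u})+\nabla p(\varrho)=\mathcal{T}(\varrho){\bf w}$, $\partial_t(\varrho{\bf w})+{\rm div}(\varrho{\bf w}\otimes{\bf u})=-\mathcal{T}(\varrho){\bf u}$ in two space dimensions, where $\mathcal{T}(\varrho){\bf v}={\rm div}(F(\varrho)\nabla{\bf v}^T)+\nabla\bigl((\varrho F'(\varrho)-F(\varrho)){\rm div}\,{\bf v}\bigr)$. Finite difference operators (indices in $\mathbb{Z}/n_x\mathbb{Z}$, $\mathbb{Z}/n_y\mathbb{Z}$, half-integer indices denote cell interfaces): $(d_1 u)_{i,j}=\frac{u_{i+1/2,j}-u_{i-1/2,j}}{\delta x}$, $(d_1^+u)_{i+1/2,j}=\frac{u_{i+1,j}-u_{i,j}}{\delta x}$, $(\bar d_1u)_{i,j}=\frac{u_{i+1,j}-u_{i-1,j}}{2\delta x}$, $(d_2 u)_{i,j}=\frac{u_{i,j+1/2}-u_{i,j-1/2}}{\delta y}$, $(d_2^+u)_{i,j+1/2}=\frac{u_{i,j+1}-u_{i,j}}{\delta y}$, $(\bar d_2 u)_{i,j}=\frac{u_{i,j+1}-u_{i,j-1}}{2\delta y}$. Discrete capillary operator: for a grid density $\varrho>0$ and a grid vector field ${\bf v}=({\bf v}_1,{\bf v}_2)$, $(\mathcal{T}_h(\varrho){\bf v})_{i,j}$ has first component $d_1\bigl(\varrho F'(\varrho)\,d_1^+{\bf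 v}_1\bigr)_{i,j}+\bar d_2\bigl(F(\varrho)\,\bar d_1{\bf v}_2\bigr)_{i,j}+\bar d_1\bigl((\varrho F'(\varrho)-F(\varrho))\,\bar d_2{\bf v}_2\bigr)_{i,j}$ and second component $\bar d_1\bigl(F(\varrho)\,\bar d_2{\bf v}_1\bigr)_{i,j}+\bar d_2\bigl((\varrho F'(\varrho)-F(\varrho))\,\bar d_1{\bf v}_1\bigr)_{i,j}+d_2\bigl(\varrho F'(\varrho)\,d_2^+{\bf v}_2\bigr)_{i,j}$, where $F(\varrho)$, $\varrho F'(\varrho)-F(\varrho)$ are evaluated cellwise, and $\varrho F'(\varrho)$ at interfaces $(i+1/2,j)$, $(i,j+1/2)$ denotes some interface value computed from $\varrho$ (e.g. an average of neighbouring cell values). Rusanov fluxes: with conservative state $U=(\varrho,\varrho{\bf u},\varrho{\bf w})$ and physical fluxes $f_k(U)=(\varrho u_k,\ \varrho u_k{\bf u}+p(\varrho){\bf e}_k,\ \varrho u_k{\bf w})$ for $k=1,2$, the interface flux in direction $1$ is $\mathcal{F}_{1,i+1/2,j}=\frac12\bigl(f_1(U_{i,j})+f_1(U_{i+1,j})\bigr)-\frac{c_{i+1/2,j}}{2}(U_{i+1,j}-U_{i,j})$ with a local wave-speed bound $c_{i+1/2,j}$, all evaluated at time level $n$, and similarly in direction $2$; $(\mathcal{F}_{\varrho,k},\mathcal{F}_{{\bf u},k},\mathcal{F}_{{\bf w},k})$ are the components of $\mathcal{F}_k$. Thus convection is treated explicitly and capillary terms implicitly; the new velocities are ${\bf u}^{n+1}=(\varrho{\bf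 u})^{n+1}/\varrho^{n+1}$, ${\bf w}^{n+1}=(\varrho{\bf w})^{n+1}/\varrho^{n+1}$. *)

From Stdlib Require Import Reals List.
From Coquelicot Require Import Coquelicot.
Open Scope R_scope.

(* Grid functions on the periodic grid: only indices i < nx, j < ny matter.
   For an interface grid, the value at index (i, j) stands for (i+1/2, j)
   (direction 1) resp. (i, j+1/2) (direction 2). *)
Definition grid := nat -> nat -> R.

Definition nxt (n i : nat) : nat := Nat.modulo (S i) n.
Definition prv (n i : nat) : nat := Nat.modulo (i + n - 1) n.

Definition gsum (nx ny : nat) (f : grid) : R :=
  fold_right Rplus 0
    (map (fun i => fold_right Rplus 0 (map (fun j => f i j) (seq 0 ny)))
         (seq 0 nx)).

(* (d1 u)_{i,j} = (u_{i+1/2,j} - u_{i-1/2,j}) / dx, u an interface grid *)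
Definition d1 (nx : nat) (dx : R) (u : grid) : grid :=
  fun i j => (u i j - u (prv nx i) j) / dx.
(* (d1^+ u)_{i+1/2,j} = (u_{i+1,j} - u_{i,j}) / dx *)
Definition d1p (nx : nat) (dx : R) (u : grid) : grid :=
  fun i j => (u (nxt nx i) j - u i j) / dx.
Definition bd1 (nx : nat) (dx : R) (u : grid) : grid :=
  fun i j => (u (nxt nx i) j - u (prv nx i) j) / (2 * dx).
Definition d2 (ny : nat) (dy : R) (u : grid) : grid :=
  fun i j => (u i j - u i (prv ny j)) / dy.
Definition d2p (ny : nat) (dy : R) (u : grid) : grid :=
  fun i j => (u i (nxt ny j) - u i j) / dy.
Definition bd2 (ny : nat) (dy : R) (u : grid) : grid :=
  fun i j => (u i (nxt ny j) - u i (prv ny j)) / (2 * dy).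

(* Discrete capillary operator T_h(rho) v, components 1 and 2.
   F is F, dF its derivative F'; I1 rho, I2 rho are the interface values of
   rho F'(rho) at (i+1/2,j) resp. (i,j+1/2), computed from rho by arbitrary
   maps I1, I2. *)
Definition Tcap1 (nx ny : nat) (dx dy : R) (F dF : R -> R)
    (I1 : grid -> grid) (rho v1 v2 : grid) : grid :=
  fun i j =>
    d1 nx dx (fun a b => I1 rho a b * d1p nx dx v1 a b) i j
    + bd2 ny dy (fun a b => F (rho a b) * bd1 nx dx v2 a b) i j
    + bd1 nx dx (fun a b => (rho a b * dF (rho a b) - F (rho a b))
                             * bd2 ny dy v2 a b) i j.

Definition Tcap2 (nx ny : nat) (dx dy : R) (F dF : R -> R)
    (I2 : grid -> grid) (rho v1 v2 : grid) : grid :=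
  fun i j =>
    bd1 nx dx (fun a b => F (rho a b) * bd2 ny dy v1 a b) i j
    + bd2 ny dy (fun a b => (rho a b * dF (rho a b) - F (rho a b))
                             * bd1 nx dx v1 a b) i j
    + d2 ny dy (fun a b => I2 rho a b * d2p ny dy v2 a b) i j.

(* Rusanov interface fluxes for one conserved component with cell values U,
   physical flux f (in the given direction), and interface wave speed c. *)
Definition rus1 (nx : nat) (c f U : grid) : grid :=
  fun i j => (f i j + f (nxt nx i) j) / 2 - c i j / 2 * (U (nxt nx i) j - U i j).
Definition rus2 (ny : nat) (c f U : grid) : grid :=
  fun i j => (f i j + f i (nxt ny j)) / 2 - c i j / 2 * (U i (nxt ny j) - U i j).

Definition conv (nx ny : nat) (dx dy : R) (c1 c2 : grid) (f1 f2 U : grid) : grid :=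
  fun i j => d1 nx dx (rus1 nx c1 f1 U) i j + d2 ny dy (rus2 ny c2 f2 U) i j.

Definition mulg (a b : grid) : grid := fun i j => a i j * b i j.
Definition pg (p : R -> R) (rho : grid) : grid := fun i j => p (rho i j).
Definition addg (a b : grid) : grid := fun i j => a i j + b i j.

Definition conv_rho nx ny dx dy c1 c2 (rho u1 u2 : grid) : grid :=
  conv nx ny dx dy c1 c2 (mulg rho u1) (mulg rho u2) rho.
Definition conv_m1 nx ny dx dy c1 c2 (p : R -> R) (rho u1 u2 : grid) : grid :=
  conv nx ny dx dy c1 c2 (addg (mulg (mulg rho u1) u1) (pg p rho))
       (mulg (mulg rho u2) u1) (mulg rho u1).
Definition conv_m2 nx ny dx dy c1 c2 (p : R -> R) (rho u1 u2 : grid) : grid :=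
  conv nx ny dx dy c1 c2 (mulg (mulg rho u1) u2)
       (addg (mulg (mulg rho u2) u2) (pg p rho)) (mulg rho u2).
Definition conv_q nx ny dx dy c1 c2 (rho u1 u2 w : grid) : grid :=
  conv nx ny dx dy c1 c2 (mulg (mulg rho u1) w) (mulg (mulg rho u2) w) (mulg rho w).

Definition Ebar (F0 : R -> R) (r a1 a2 b1 b2 : R) : R :=
  r / 2 * (a1 ^ 2 + a2 ^ 2 + b1 ^ 2 + b2 ^ 2) + F0 r.

Definition total_entropy (nx ny : nat) (F0 : R -> R) (rho u1 u2 w1 w2 : grid) : R :=
  gsum nx ny (fun i j => Ebar F0 (rho i j) (u1 i j) (u2 i j) (w1 i j) (w2 i j)).

Definition smooth_pos (f : R -> R) : Prop :=
  forall (k : nat) (r : R), 0 < r -> ex_derive_n f k r.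

(* The discrete capillary operator T_h(rho) is symmetric for the pairing
   <a, b> = sum_{i,j} (a_1 b_1 + a_2 b_2) on the periodic grid: summation by
   parts moves every difference operator onto the other argument, producing a
   bilinear form that is symmetric in (u, w).  Hence the capillary work
   <u', T_h w'> in the momentum equation cancels the work -<w', T_h u'> in the
   w equation.  Since the density equation carries no capillary term, the new
   density equals the hyperbolic one, and convexity of the kinetic energy
   m |-> |m|^2 / (2 rho) bounds the new entropy by the hyperbolic entropy plus
   dt times that (vanishing) work. *)

From Pilot Require Import Defs.
From Stdlib Require Import Reals List Lra Lia.
From Coquelicot Require Import Coquelicot.
Open Scope R_scope.

Definition lsum (n : nat) (f : nat -> R) : R := fold_right Rplus 0 (map f (seq 0 n)).

Lemma lsum_0 f : lsum 0 f = 0.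
Proof. reflexivity. Qed.

Lemma lsum_S n f : lsum (S n) f = lsum n f + f n.
Proof.
  unfold lsum. rewrite seq_S, map_app, fold_right_app. simpl.
  induction (map f (seq 0 n)); simpl; lra.
Qed.

Lemma lsum_Sl n f : lsum (S n) f = f O + lsum n (fun i => f (S i)).
Proof. unfold lsum. simpl. rewrite <- seq_shift, map_map. reflexivity. Qed.

Lemma lsum_ext n f g : (forall i, (i < n)%nat -> f i = g i) -> lsum n f = lsum n g.
Proof.
  induction n; intros H; [reflexivity|].
  rewrite !lsum_S, IHn, H; auto.
Qed.

Lemma lsum_le n f g : (forall i, (i < n)%nat -> f i <= g i) -> lsum n f <= lsum n g.
Proof.
  induction n; intros H; [rewrite !lsum_0; lra|].
  rewrite !lsum_S. apply Rplus_le_compat; auto.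
Qed.

Lemma lsum_plus n f g : lsum n (fun i => f i + g i) = lsum n f + lsum n g.
Proof. induction n; [rewrite !lsum_0; lra|]. rewrite !lsum_S, IHn. lra. Qed.

Lemma lsum_scal n c f : lsum n (fun i => c * f i) = c * lsum n f.
Proof. induction n; [rewrite !lsum_0; lra|]. rewrite !lsum_S, IHn. lra. Qed.

Lemma lsum_comm n m f :
  lsum n (fun i => lsum m (fun j => f i j)) = lsum m (fun j => lsum n (fun i => f i j)).
Proof.
  induction n.
  - rewrite (lsum_ext m _ (fun j => 0 * 0)) by (intros; rewrite lsum_0; ring).
    rewrite (lsum_scal m 0 (fun _ => 0)), lsum_0. ring.
  - rewrite lsum_S, IHn, <- lsum_plus. apply lsum_ext. intros. now rewrite lsum_S.
Qed.

Lemma nxt_small n i : (S i < n)%nat -> nxt n i = S i.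
Proof. intros. now apply Nat.mod_small. Qed.

Lemma nxt_last m : nxt (S m) m = O.
Proof. apply Nat.Div0.mod_same. Qed.

Lemma prv_S m k : (k < S m)%nat -> prv (S m) (S k) = k.
Proof.
  intros. unfold prv. replace (S k + S m - 1)%nat with (k + 1 * S m)%nat by lia.
  rewrite Nat.Div0.mod_add. now apply Nat.mod_small.
Qed.

Lemma prv_0 m : prv (S m) O = m.
Proof. unfold prv. replace (0 + S m - 1)%nat with m by lia. apply Nat.mod_small. lia. Qed.

Lemma prv_nxt n i : (i < n)%nat -> prv n (nxt n i) = i.
Proof.
  intros. destruct n as [|m]; [lia|].
  destruct (Nat.eq_dec i m) as [->|].
  - now rewrite nxt_last, prv_0.
  - rewrite nxt_small by lia. apply prv_S. lia.
Qed.

Lemma nxt_prv n i : (i < n)%nat -> nxt n (prv n i) = i.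
Proof.
  intros. destruct n as [|m]; [lia|].
  destruct i as [|k].
  - now rewrite prv_0, nxt_last.
  - rewrite prv_S by lia. apply nxt_small. lia.
Qed.

Lemma lsum_nxt n f : (0 < n)%nat -> lsum n (fun i => f (nxt n i)) = lsum n f.
Proof.
  intros. destruct n as [|m]; [lia|].
  rewrite lsum_S, nxt_last, lsum_Sl.
  rewrite (lsum_ext m _ (fun i => f (S i))); [lra|].
  intros. rewrite nxt_small; auto. lia.
Qed.

Lemma lsum_prv n f : (0 < n)%nat -> lsum n (fun i => f (prv n i)) = lsum n f.
Proof.
  intros. rewrite <- (lsum_nxt n (fun i => f (prv n i))) by auto.
  apply lsum_ext. intros. now rewrite prv_nxt.
Qed.

Section GridSums.

Variables nx ny : nat.

Lemma gsum_lsum f : gsum nx ny f = lsum nx (fun i => lsum ny (fun j => f i j)).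
Proof. reflexivity. Qed.

Lemma gsum_ext f g : (forall i j, (i < nx)%nat -> (j < ny)%nat -> f i j = g i j) ->
  gsum nx ny f = gsum nx ny g.
Proof. intros. apply lsum_ext; intros. apply lsum_ext; auto. Qed.

Lemma gsum_le f g : (forall i j, (i < nx)%nat -> (j < ny)%nat -> f i j <= g i j) ->
  gsum nx ny f <= gsum nx ny g.
Proof. intros. apply lsum_le; intros. apply lsum_le; auto. Qed.

Lemma gsum_plus f g : gsum nx ny (fun i j => f i j + g i j) = gsum nx ny f + gsum nx ny g.
Proof.
  rewrite !gsum_lsum, <- lsum_plus.
  apply lsum_ext; intros. apply lsum_plus.
Qed.

Lemma gsum_scal c f : gsum nx ny (fun i j => c * f i j) = c * gsum nx ny f.
Proof.
  rewrite !gsum_lsum, <- lsum_scal.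
  apply lsum_ext; intros. apply lsum_scal.
Qed.

Lemma gsum_minus f g : gsum nx ny (fun i j => f i j - g i j) = gsum nx ny f - gsum nx ny g.
Proof.
  rewrite (gsum_ext _ (fun i j => f i j + (-1) * g i j)) by (intros; ring).
  rewrite gsum_plus, gsum_scal. ring.
Qed.

Lemma gsum_transpose f : gsum nx ny f = gsum ny nx (fun j i => f i j).
Proof. apply lsum_comm. Qed.

Hypothesis nx_gt0 : (0 < nx)%nat.

Lemma gsum_nxt1 f : gsum nx ny (fun i j => f (nxt nx i) j) = gsum nx ny f.
Proof. exact (lsum_nxt nx (fun i => lsum ny (fun j => f i j)) nx_gt0). Qed.

Lemma gsum_prv1 f : gsum nx ny (fun i j => f (prv nx i) j) = gsum nx ny f.
Proof. exact (lsum_prv nx (fun i => lsum ny (fun j => f i j)) nx_gt0). Qed.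

Lemma gsum_mul_prv1 a g :
  gsum nx ny (fun i j => a i j * g (prv nx i) j) = gsum nx ny (fun i j => a (nxt nx i) j * g i j).
Proof.
  rewrite <- (gsum_prv1 (fun i j => a (nxt nx i) j * g i j)).
  apply gsum_ext; intros. now rewrite nxt_prv.
Qed.

Lemma gsum_mul_nxt1 a g :
  gsum nx ny (fun i j => a i j * g (nxt nx i) j) = gsum nx ny (fun i j => a (prv nx i) j * g i j).
Proof.
  rewrite <- (gsum_nxt1 (fun i j => a (prv nx i) j * g i j)).
  apply gsum_ext; intros. now rewrite prv_nxt.
Qed.

Lemma sum_by_parts_d1 dx a g :
  gsum nx ny (fun i j => a i j * Defs.d1 nx dx g i j)
  = - gsum nx ny (fun i j => d1p nx dx a i j * g i j).
Proof.
  unfold Defs.d1, d1p.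
  rewrite (gsum_ext _ (fun i j => /dx * (a i j * g i j) - /dx * (a i j * g (prv nx i) j)))
    by (intros; unfold Rdiv; ring).
  rewrite (gsum_ext (fun i j => _ / dx * _)
             (fun i j => /dx * (a (nxt nx i) j * g i j) - /dx * (a i j * g i j)))
    by (intros; unfold Rdiv; ring).
  rewrite !gsum_minus, !gsum_scal, gsum_mul_prv1. ring.
Qed.

Lemma sum_by_parts_bd1 dx a g :
  gsum nx ny (fun i j => a i j * bd1 nx dx g i j)
  = - gsum nx ny (fun i j => bd1 nx dx a i j * g i j).
Proof.
  unfold bd1. set (c := / (2 * dx)).
  rewrite (gsum_ext _ (fun i j => c * (a i j * g (nxt nx i) j) - c * (a i j * g (prv nx i) j)))
    by (intros; unfold c, Rdiv; ring).
  rewrite (gsum_ext (fun i j => _ / (2 * dx) * _)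
             (fun i j => c * (a (nxt nx i) j * g i j) - c * (a (prv nx i) j * g i j)))
    by (intros; unfold c, Rdiv; ring).
  rewrite !gsum_minus, !gsum_scal, gsum_mul_prv1, gsum_mul_nxt1. ring.
Qed.

End GridSums.

Lemma sum_by_parts_d2 nx ny dy a g : (0 < ny)%nat ->
  gsum nx ny (fun i j => a i j * Defs.d2 ny dy g i j)
  = - gsum nx ny (fun i j => d2p ny dy a i j * g i j).
Proof.
  intros Hny. rewrite !(gsum_transpose nx ny).
  (* on the transposed grid, d2 and d2p are definitionally d1 and d1p *)
  exact (sum_by_parts_d1 ny nx Hny dy (fun j i => a i j) (fun j i => g i j)).
Qed.

Lemma sum_by_parts_bd2 nx ny dy a g : (0 < ny)%nat ->
  gsum nx ny (fun i j => a i j * bd2 ny dy g i j)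
  = - gsum nx ny (fun i j => bd2 ny dy a i j * g i j).
Proof.
  intros Hny. rewrite !(gsum_transpose nx ny).
  exact (sum_by_parts_bd1 ny nx Hny dy (fun j i => a i j) (fun j i => g i j)).
Qed.

Section Capillarity.

Variables (nx ny : nat) (dx dy : R) (F dF : R -> R) (I1 I2 : grid -> grid).
Hypotheses (nx_gt0 : (0 < nx)%nat) (ny_gt0 : (0 < ny)%nat).

Definition cap_pairing (rho u1 u2 w1 w2 : grid) : R :=
  gsum nx ny (fun i j => u1 i j * Tcap1 nx ny dx dy F dF I1 rho w1 w2 i j
                       + u2 i j * Tcap2 nx ny dx dy F dF I2 rho w1 w2 i j).

Definition cap_form (rho u1 u2 w1 w2 : grid) : R :=
  - gsum nx ny (fun i j =>
      d1p nx dx u1 i j * (I1 rho i j * d1p nx dx w1 i j)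
    + bd2 ny dy u1 i j * (F (rho i j) * bd1 nx dx w2 i j)
    + bd1 nx dx u1 i j * ((rho i j * dF (rho i j) - F (rho i j)) * bd2 ny dy w2 i j)
    + bd1 nx dx u2 i j * (F (rho i j) * bd2 ny dy w1 i j)
    + bd2 ny dy u2 i j * ((rho i j * dF (rho i j) - F (rho i j)) * bd1 nx dx w1 i j)
    + d2p ny dy u2 i j * (I2 rho i j * d2p ny dy w2 i j)).

Lemma cap_pairing_form rho u1 u2 w1 w2 :
  cap_pairing rho u1 u2 w1 w2 = cap_form rho u1 u2 w1 w2.
Proof.
  unfold cap_pairing, Tcap1, Tcap2.
  rewrite (gsum_ext nx ny _ (fun i j =>
     u1 i j * Defs.d1 nx dx (fun a b => I1 rho a b * d1p nx dx w1 a b) i j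
   + u1 i j * bd2 ny dy (fun a b => F (rho a b) * bd1 nx dx w2 a b) i j
   + u1 i j * bd1 nx dx (fun a b => (rho a b * dF (rho a b) - F (rho a b))
                                     * bd2 ny dy w2 a b) i j
   + u2 i j * bd1 nx dx (fun a b => F (rho a b) * bd2 ny dy w1 a b) i j
   + u2 i j * bd2 ny dy (fun a b => (rho a b * dF (rho a b) - F (rho a b))
                                     * bd1 nx dx w1 a b) i j
   + u2 i j * Defs.d2 ny dy (fun a b => I2 rho a b * d2p ny dy w2 a b) i j))
   by (intros; ring).
  rewrite !gsum_plus, sum_by_parts_d1, sum_by_parts_bd2, !sum_by_parts_bd1,
    sum_by_parts_bd2, sum_by_parts_d2 by auto.
  unfold cap_form. rewrite !gsum_plus. ring.
Qed.

Lemma cap_pairing_sym rho u1 u2 w1 w2 :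
  cap_pairing rho u1 u2 w1 w2 = cap_pairing rho w1 w2 u1 u2.
Proof.
  rewrite !cap_pairing_form. unfold cap_form. f_equal. apply gsum_ext. intros. ring.
Qed.

End Capillarity.

Lemma kinetic_le_update r a m : 0 < r ->
  r / 2 * a ^ 2 <= r / 2 * (m / r) ^ 2 + (r * a - m) * a.
Proof.
  intros. replace m with (r * (m / r)) at 2 by (field; lra).
  set (b := m / r).
  assert (0 <= r * (a - b) ^ 2) by (apply Rmult_le_pos; [lra | apply pow2_ge_0]).
  nra.
Qed.

Lemma Ebar_le_update F0 r a1 a2 b1 b2 m1 m2 q1 q2 : 0 < r ->
  Ebar F0 r a1 a2 b1 b2
  <= Ebar F0 r (m1 / r) (m2 / r) (q1 / r) (q2 / r)
     + ((r * a1 - m1) * a1 + (r * a2 - m2) * a2 + (r * b1 - q1) * b1 + (r * b2 - q2) * b2).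
Proof.
  intros Hr. unfold Ebar. rewrite !Rmult_plus_distr_l.
  pose proof (kinetic_le_update r a1 m1 Hr). pose proof (kinetic_le_update r a2 m2 Hr).
  pose proof (kinetic_le_update r b1 q1 Hr). pose proof (kinetic_le_update r b2 q2 Hr).
  lra.
Qed.

Lemma implicit_step_increment dt x x' C T : 0 < dt ->
  (x' - x) / dt + C = T -> x' - (x - dt * C) = dt * T.
Proof. intros Hdt <-. field. lra. Qed.

Lemma total_entropy_le_update nx ny F0 dt (r a1 a2 b1 b2 m1 m2 q1 q2 A1 A2 B1 B2 : grid) :
  (forall i j, (i < nx)%nat -> (j < ny)%nat ->
     0 < r i j
  /\ r i j * a1 i j - m1 i j = dt * A1 i j /\ r i j * a2 i j - m2 i j = dt * A2 i j
  /\ r i j * b1 i j - q1 i j = dt * - B1 i j /\ r i j * b2 i j - q2 i j = dt * - B2 i j) ->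
  total_entropy nx ny F0 r a1 a2 b1 b2
  <= total_entropy nx ny F0 r (fun i j => m1 i j / r i j) (fun i j => m2 i j / r i j)
                              (fun i j => q1 i j / r i j) (fun i j => q2 i j / r i j)
     + dt * (gsum nx ny (fun i j => a1 i j * A1 i j + a2 i j * A2 i j)
             - gsum nx ny (fun i j => b1 i j * B1 i j + b2 i j * B2 i j)).
Proof.
  intros Hcell. unfold total_entropy.
  rewrite <- gsum_minus, <- gsum_scal, <- gsum_plus.
  apply gsum_le. intros i j Hi Hj.
  destruct (Hcell i j Hi Hj) as (Hr & E1 & E2 & E3 & E4).
  eapply Rle_trans.
  { exact (Ebar_le_update F0 _ _ _ _ _ (m1 i j) (m2 i j) (q1 i j) (q2 i j) Hr). }
  rewrite E1, E2, E3, E4. apply Req_le. ring.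
Qed.

Theorem mainTheorem2
  (nx ny : nat) (hnx : (0 < nx)%nat) (hny : (0 < ny)%nat)
  (dx dy dt : R) (hdx : 0 < dx) (hdy : 0 < dy) (hdt : 0 < dt)
  (K F F0 : R -> R)
  (hKs : smooth_pos K) (hKpos : forall r, 0 < r -> 0 < K r)
  (hF : forall r, 0 < r -> is_derive F r (sqrt (K r * r)))
  (hF0s : smooth_pos F0)
  (I1 I2 : grid -> grid)          (* interface values of rho F'(rho) *)
  (c1 c2 : grid)                  (* Rusanov wave-speed bounds at level n *)
  (rho u1 u2 w1 w2 : grid)        (* data at level n *)
  (rho' u1' u2' w1' w2' : grid)   (* solution at level n+1 *)
  (hrho : forall i j, (i < nx)%nat -> (j < ny)%nat -> 0 < rho i j) :
  let p := fun r => r * Derive F0 r - F0 r in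
  let dF := Derive F in
  let Crho := conv_rho nx ny dx dy c1 c2 rho u1 u2 in
  let Cm1 := conv_m1 nx ny dx dy c1 c2 p rho u1 u2 in
  let Cm2 := conv_m2 nx ny dx dy c1 c2 p rho u1 u2 in
  let Cq1 := conv_q nx ny dx dy c1 c2 rho u1 u2 w1 in
  let Cq2 := conv_q nx ny dx dy c1 c2 rho u1 u2 w2 in
  (* hyperbolic scheme (F = 0): explicit update *)
  let rs := fun i j => rho i j - dt * Crho i j in
  let ms1 := fun i j => rho i j * u1 i j - dt * Cm1 i j in
  let ms2 := fun i j => rho i j * u2 i j - dt * Cm2 i j in
  let qs1 := fun i j => rho i j * w1 i j - dt * Cq1 i j in
  let qs2 := fun i j => rho i j * w2 i j - dt * Cq2 i j in
  (* entropy stability of the hyperbolic scheme (for these data) *)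
  ((forall i j, (i < nx)%nat -> (j < ny)%nat -> 0 < rs i j) ->
    total_entropy nx ny F0 rs
      (fun i j => ms1 i j / rs i j) (fun i j => ms2 i j / rs i j)
      (fun i j => qs1 i j / rs i j) (fun i j => qs2 i j / rs i j)
    <= total_entropy nx ny F0 rho u1 u2 w1 w2) ->
  (* positivity of the new density *)
  (forall i j, (i < nx)%nat -> (j < ny)%nat -> 0 < rho' i j) ->
  (* the full scheme *)
  (forall i j, (i < nx)%nat -> (j < ny)%nat ->
     (rho' i j - rho i j) / dt + Crho i j = 0
  /\ (rho' i j * u1' i j - rho i j * u1 i j) / dt + Cm1 i j
       = Tcap1 nx ny dx dy F dF I1 rho' w1' w2' i j
  /\ (rho' i j * u2' i j - rho i j * u2 i j) / dt + Cm2 i j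
       = Tcap2 nx ny dx dy F dF I2 rho' w1' w2' i j
  /\ (rho' i j * w1' i j - rho i j * w1 i j) / dt + Cq1 i j
       = - Tcap1 nx ny dx dy F dF I1 rho' u1' u2' i j
  /\ (rho' i j * w2' i j - rho i j * w2 i j) / dt + Cq2 i j
       = - Tcap2 nx ny dx dy F dF I2 rho' u1' u2' i j) ->
  total_entropy nx ny F0 rho' u1' u2' w1' w2'
    <= total_entropy nx ny F0 rho u1 u2 w1 w2.
Proof.
  intros p dF Crho Cm1 Cm2 Cq1 Cq2 rs ms1 ms2 qs1 qs2 Hhyp Hpos Hsch.
  assert (Hrs : forall i j, (i < nx)%nat -> (j < ny)%nat -> rs i j = rho' i j).
  { intros i j Hi Hj. destruct (Hsch i j Hi Hj) as [E0 _].
    apply (implicit_step_increment dt) in E0; trivial. unfold rs. lra. }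
  eapply Rle_trans.
  { apply (total_entropy_le_update nx ny F0 dt rho' u1' u2' w1' w2' ms1 ms2 qs1 qs2
      (Tcap1 nx ny dx dy F dF I1 rho' w1' w2') (Tcap2 nx ny dx dy F dF I2 rho' w1' w2')
      (Tcap1 nx ny dx dy F dF I1 rho' u1' u2') (Tcap2 nx ny dx dy F dF I2 rho' u1' u2')).
    intros i j Hi Hj. destruct (Hsch i j Hi Hj) as (_ & E1 & E2 & E3 & E4).
    repeat split; auto; now apply implicit_step_increment. }
  fold (cap_pairing nx ny dx dy F dF I1 I2 rho' u1' u2' w1' w2').
  fold (cap_pairing nx ny dx dy F dF I1 I2 rho' w1' w2' u1' u2').
  rewrite cap_pairing_sym, Rminus_diag, Rmult_0_r, Rplus_0_r by assumption.
  eapply Rle_trans; [apply Req_le | apply Hhyp].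
  - apply gsum_ext. intros i j Hi Hj. now rewrite Hrs.
  - intros i j Hi Hj. rewrite Hrs; auto.
Qed.
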